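(* Let $A$ be a $d\times d$ $\{0,1\}$-matrix and $\mathbb{F}\in\{\mathbb{R},\mathbb{C}\}$. For $K\in\mathcal{STAF}(A)$ and $n\in\mathbb{N}$ let $\mathbf{K}^{(n)}\in\mathbb{F}^d$ have $j$-th component $K(s_0\dots s_{n-1}j)$ for any allowable block $s_0\dots s_{n-1}j$ (for $n=0$, $K(j)$). Then $\mathbf{K}=(\mathbf{K}^{(0)},\mathbf{K}^{(1)},\dots)$ is a thread of $A$, and $K\mapsto\mathbf{K}$ is a vector space isomorphism from $\mathcal{STAF}(A)$ onto $\varprojlim(\mathbb{F}^d,A)$. Moreover $\varprojlim(\mathbb{F}^d,A)$ is isomorphic to $NonN(A,\mathbb{F}^d)$.
   Context: Symbols are $S=\{1,\dots,d\}$; $i\to j$ is an allowable transition iff $A_{ij}=1$. An allowable block is a finite word $s_0\dots s_{n-1}$ with $s_k\to s_{k+1}$ for all $k$; its length is the number of symbols; $\mathcal{B}(A)$ is the set of allowable blocks. A symbolic transverse arc function (staf) is a map $K:\mathcal{B}(A)\to\mathbb{F}$ which is additive, $K(s_0\dots s_{n-1}j)=\sum_{k:\,j\to k}K(s_0\dots s_{n-1}jk)$ for every allowable block $s_0\dots s_{n-1}j$, and coherent, $K(s_0\dots s_nj)=K(s_0'\dots s_n'j)$ for all allowable blocks of the same length ending in the same symbol. $\mathcal{STAF}(A)$ is the vector space of stafs. A thread of $A$ is a sequence $(\vec v_0,\vec v_1,\dots)$ in $\mathbb{F}^d$ with $\vec v_n=A\vec v_{n+1}$ for all $n$; $\varprojlim(\mathbb{F}^d,A)$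 is the space of threads. $NonN(A,\mathbb{F}^d)$ is the sum of the generalized eigenspaces of $A$ for nonzero eigenvalues.
   Formalization: The claims about K ↦ 𝐊 hold only for A with no zero column (every symbol j has some i → j), and NonN(A, ℝᵈ) means the real vectors lying in NonN(A, ℂᵈ). Each condition added here is assumed in the paper as well or is needed for the statement above to hold. *)

From HB Require Import structures.
From mathcomp Require Import all_boot all_order all_algebra.
From mathcomp Require Import reals complex.
Set Implicit Arguments. Unset Strict Implicit. Unset Printing Implicit Defensive.
Import Order.TTheory GRing.Theory Num.Theory.
Local Open Scope ring_scope.

Section Defs.
Variable d : nat.
(* The {0,1}-matrix A is given as a boolean matrix: A i j = true iff A_ij = 1,
   i.e. iff i -> j is an allowable transition.  Symbols are 'I_d. *)
Variable A : 'M[bool]_d.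

Definition mxF (F : fieldType) : 'M[F]_d := map_mx (fun b : bool => (b : nat)%:R) A.

Definition allowable (s : seq 'I_d) : bool :=
  if s is x :: s' then path (fun i j => A i j) x s' else false.

Variable F : fieldType.

(* symbolic transverse arc functions (values off B(A) are irrelevant) *)
Definition staf_additive (K : seq 'I_d -> F) : Prop :=
  forall (s : seq 'I_d) (j : 'I_d), allowable (rcons s j) ->
    K (rcons s j) = \sum_(k | A j k) K (rcons (rcons s j) k).

Definition staf_coherent (K : seq 'I_d -> F) : Prop :=
  forall (s s' : seq 'I_d) (j : 'I_d), size s = size s' ->
    allowable (rcons s j) -> allowable (rcons s' j) ->
    K (rcons s j) = K (rcons s' j).

Definition is_staf (K : seq 'I_d -> F) : Prop := staf_additive K /\ staf_coherent K.

Definition is_thread (v : nat -> 'cV[F]_d) : Prop :=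
  forall n, v n = mxF F *m v n.+1.

(* K^(n): j-th component is K(s_0 ... s_{n-1} j) for an allowable block of
   length n+1 ending in j (chosen by [pick]); 0 if no such block exists. *)
Definition Kvec (K : seq 'I_d -> F) (n : nat) : 'cV[F]_d :=
  \col_j (if [pick t : n.+1.-tuple 'I_d | allowable t && (tnth t ord_max == j)]
          is Some t then K t else 0).

(* The statement of Fact 8.2 over F, with NonN(A, F^d) given as a predicate N *)
Definition fact_body (N : 'cV[F]_d -> Prop) : Prop :=
  ((forall j : 'I_d, exists i : 'I_d, A i j) ->
     (forall (a : F) (K L : seq 'I_d -> F), is_staf K -> is_staf L ->
        is_staf (fun s => a * K s + L s)) /\
     (forall K, is_staf K -> is_thread (Kvec K)) /\
     (forall (a : F) (K L : seq 'I_d -> F) n,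
        Kvec (fun s => a * K s + L s) n = a *: Kvec K n + Kvec L n) /\
     (* injective on STAF(A) (stafs are functions on B(A)) *)
     (forall K L, is_staf K -> is_staf L -> (forall n, Kvec K n = Kvec L n) ->
        forall s, allowable s -> K s = L s) /\
     (forall v, is_thread v -> exists K, is_staf K /\ forall n, Kvec K n = v n))
  /\
  (exists phi : (nat -> 'cV[F]_d) -> 'cV[F]_d,
     (forall (a : F) v w, is_thread v -> is_thread w ->
        phi (fun n => a *: v n + w n) = a *: phi v + phi w) /\
     (forall v, is_thread v -> N (phi v)) /\
     (forall v w, is_thread v -> is_thread w -> phi v = phi w -> v = w) /\
     (forall x, N x -> exists v, is_thread v /\ phi v = x)).

End Defs.

(* NonN(M, F^d) for F algebraically closed (here F = C): the sum of the
   generalized eigenspaces of M for nonzero eigenvalues. *)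
Definition NonN_closed (F : fieldType) (d : nat) (M : 'M[F]_d) (x : 'cV[F]_d) : Prop :=
  exists s : seq (F * 'cV[F]_d),
    (forall p, p \in s -> p.1 != 0 /\ exists k : nat, (M - p.1%:M) ^+ k *m p.2 = 0) /\
    x = \sum_(p <- s) p.2.

(* NonN(M, R^d): real vectors lying in the sum of the (complex) generalized
   eigenspaces of M for nonzero eigenvalues. *)
Definition NonN_real (R : realType) (d : nat) (M : 'M[R]_d) (x : 'cV[R]_d) : Prop :=
  NonN_closed (map_mx (fun r : R => (r%:C)%C) M) (map_mx (fun r : R => (r%:C)%C) x).

(* Coherence says that K on an allowable block depends only on its length and
   last symbol, so a staf is the same as its sequence of vectors K^(n), and
   additivity is exactly K^(n) = A K^(n+1); conversely a thread v defines the
   staf K(s_0 ... s_{n-1} j) := v_n(j).  A thread is determined by v_0, which lies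
   in the range of A^d: by Cayley-Hamilton, char A = X^m q with q(0) != 0, which
   yields S commuting with A and A^d = S A^(d+1), so A is injective on that range
   and v_n := S^n v_0 is a thread through any v_0 in it.  Finally the range of A^d
   is NonN(A): Bezout for (X - a)^k and X^d with a != 0 gives one inclusion,
   and splitting q into linear factors over C gives the other. *)

From HB Require Import structures.
From mathcomp Require Import all_boot all_order all_algebra.
From mathcomp Require Import reals complex.
From mathcomp Require Import zify.
From Stdlib Require Import FunctionalExtensionality.
Set Implicit Arguments. Unset Strict Implicit. Unset Printing Implicit Defensive.
Import Order.TTheory GRing.Theory Num.Theory.
Local Open Scope ring_scope.

Section Stafs.
Variables (d : nat) (A : 'M[bool]_d) (F : fieldType).
Implicit Types (K L : seq 'I_d -> F) (s : seq 'I_d) (v : nat -> 'cV[F]_d).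

Lemma allowable_rcons s i j : allowable A (rcons s i) -> A i j ->
  allowable A (rcons (rcons s i) j).
Proof.
case: s => [|x s] /=; first by rewrite andbT.
by rewrite !rcons_path last_rcons => -> ->.
Qed.

Lemma KvecE K n s j : staf_coherent A K -> size s = n -> allowable A (rcons s j) ->
  Kvec A K n j 0 = K (rcons s j).
Proof.
move=> cohK sz_s As; rewrite mxE; case: pickP => [t /andP[At /eqP tj] | no_t].
  have sz_t : size t = n.+1 by rewrite size_tuple.
  have t_rcons : (t : seq _) = rcons (take n t) j.
    by rewrite -tj (tnth_nth j) -take_nth ?sz_t // take_oversize ?sz_t.
  by rewrite t_rcons; apply: cohK; rewrite -?t_rcons // size_take sz_t ltnSn.
have sz_sj : size (rcons s j) == n.+1 by rewrite size_rcons sz_s.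
by have := no_t (Tuple sz_sj); rewrite /= As (tnth_nth j) /= nth_rcons sz_s ltnn !eqxx.
Qed.

Lemma mxF_mulE (u : 'cV[F]_d) j : (mxF A F *m u) j 0 = \sum_(k | A j k) u k 0.
Proof.
rewrite mxE [RHS]big_mkcond; apply: eq_bigr => k _; rewrite mxE.
by case: (A j k); rewrite ?mul1r ?mul0r.
Qed.

Lemma is_staf_lin (a : F) K L : is_staf A K -> is_staf A L ->
  is_staf A (fun s => a * K s + L s).
Proof.
move=> [addK cohK] [addL cohL]; split => [s j As | s s' j sz As As'].
  by rewrite addK // addL // mulr_sumr -big_split.
by rewrite (cohK s s') // (cohL s s').
Qed.

Lemma Kvec_lin (a : F) K L n :
  Kvec A (fun s => a * K s + L s) n = a *: Kvec A K n + Kvec A L n.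
Proof.
by apply/colP => j; rewrite !mxE; case: pickP => [t _|_]; rewrite ?mulr0 ?addr0.
Qed.

Lemma staf_eq_Kvec K L : is_staf A K -> is_staf A L ->
  (forall n, Kvec A K n = Kvec A L n) -> forall s, allowable A s -> K s = L s.
Proof.
move=> [_ cohK] [_ cohL] eqKL [//|x s]; rewrite lastI => As.
by rewrite -(KvecE cohK (erefl _) As) -(KvecE cohL (erefl _) As) eqKL.
Qed.

Definition staf_of_thread v s : F :=
  if s is x :: s' then v (size s') (last x s') 0 else 0.

Lemma staf_of_threadE v s j : staf_of_thread v (rcons s j) = v (size s) j 0.
Proof. by case: s => [|x s] //=; rewrite last_rcons size_rcons. Qed.

Lemma staf_of_thread_coherent v : staf_coherent A (staf_of_thread v).
Proof. by move=> s s' j sz _ _; rewrite !staf_of_threadE sz. Qed.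

Lemma is_staf_of_thread v : is_thread A v -> is_staf A (staf_of_thread v).
Proof.
move=> vA; split; last exact: staf_of_thread_coherent.
move=> s j _; rewrite staf_of_threadE vA mxF_mulE; apply: eq_bigr => k _.
by rewrite staf_of_threadE size_rcons.
Qed.

Section EverySymbolHasPredecessor.
Hypothesis has_pred : forall j : 'I_d, exists i : 'I_d, A i j.

Lemma exists_allowable_rcons n j : exists s, size s = n /\ allowable A (rcons s j).
Proof.
elim: n j => [|n IHn] j; first by exists [::].
have [i Aij] := has_pred j; have [s [sz_s As]] := IHn i.
by exists (rcons s i); rewrite size_rcons sz_s; split => //; apply: allowable_rcons.
Qed.

Lemma Kvec_thread K : is_staf A K -> is_thread A (Kvec A K).
Proof.
move=> [addK cohK] n; apply/colP => j.
have [s [sz_s As]] := exists_allowable_rcons n j.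
rewrite mxF_mulE (KvecE cohK sz_s As) addK //; apply: eq_bigr => k Ajk.
by rewrite (KvecE cohK (s := rcons s j)) ?size_rcons ?sz_s // allowable_rcons.
Qed.

Lemma Kvec_staf_of_thread v n : Kvec A (staf_of_thread v) n = v n.
Proof.
apply/colP => j; have [s [sz_s As]] := exists_allowable_rcons n j.
by rewrite (KvecE (staf_of_thread_coherent v) sz_s As) staf_of_threadE sz_s.
Qed.

End EverySymbolHasPredecessor.
End Stafs.

Section Fitting.
Variable F : fieldType.

Lemma char_poly_split_X n (M : 'M[F]_n.+1) : exists m q, (m <= n.+1)%N /\
  ~~ root q 0 /\ horner_mx M q * M ^+ m = 0.
Proof.
have [m [q q0 charE]] := multiplicity_XsubC (char_poly M) 0.
rewrite monic_neq0 ?char_poly_monic //= in q0.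
have q_neq0 : q != 0 by apply: contraNneq q0 => ->; rewrite root0.
rewrite subr0 in charE; exists m, q; split; last split => //.
  have := size_char_poly M; rewrite charE size_Mmonic ?monicXn // size_polyXn.
  by case: (size q) (size_poly_gt0 q) => [|k]; rewrite ?q_neq0 //= => _; lia.
by have := Cayley_Hamilton M; rewrite charE rmorphM rmorphXn /= horner_mx_X.
Qed.

(* The Fitting decomposition in one identity: [M] is invertible on the range of
   [M ^+ d], with an inverse [S] that is a polynomial in [M]. *)
Lemma exists_commuting_range_inverse d (M : 'M[F]_d) :
  exists S : 'M_d, S * M = M * S /\ M ^+ d = S * M ^+ d.+1.
Proof.
case: d M => [|n] M; first by exists 0; rewrite !flatmx0.
have [m [q [le_m_n [q0 qM0]]]] := char_poly_split_X M.
have [r qE] : exists r, q = r * 'X + (q.[0])%:P.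
  have /factor_theorem[r Er] : root (q - (q.[0])%:P) 0.
    by rewrite /root hornerD hornerN hornerC subrr.
  by exists r; rewrite subr0 in Er; rewrite -Er subrK.
pose S := - ((q.[0])^-1)%:M * horner_mx M r.
have SM : S * M = M * S.
  have rM : M * horner_mx M r = horner_mx M r * M.
    by have := comm_mx_horner r (erefl (M *m M)); rewrite /comm_mx !mulmxE.
  rewrite /S -mulrA -rM !mulrA; congr (_ * _); rewrite mulNr mulrN; congr (- _).
  by have := scalar_mxC (q.[0])^-1 M; rewrite !mulmxE.
have SMm : M ^+ m = S * M ^+ m.+1.
  move: qM0; rewrite qE rmorphD rmorphM /= horner_mx_X horner_mx_C mulrDl.
  move/eqP; rewrite addr_eq0 => /eqP rMm.
  have -> : M ^+ m = (q.[0])^-1%:M * ((q.[0])%:M * M ^+ m).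
    by rewrite -!mulmxE !mul_scalar_mx scalerA mulVf // scale1r.
  by rewrite -[_%:M * M ^+ m]opprK -rMm /S exprS !mulrA mulrN mulNr !mulrA !mulNr.
exists S; split => //.
have -> : M ^+ n.+1 = M ^+ (n.+1 - m) * M ^+ m by rewrite -exprD subnK.
by rewrite SMm mulrA -(commrX _ SM) -mulrA -exprD addnS subnK.
Qed.

End Fitting.

Section Threads.
Variables (F : fieldType) (d : nat) (M : 'M[F]_d).
Implicit Types v w : nat -> 'cV[F]_d.

Definition mx_thread v := forall n, v n = M *m v n.+1.

Lemma mx_thread_shift v : mx_thread v -> forall n k, v n = M ^+ k *m v (n + k)%N.
Proof.
move=> vM n; elim=> [|k IHk]; first by rewrite expr0 mul1mx addn0.
by rewrite IHk vM exprSr -mulmxE -mulmxA addnS.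
Qed.

Lemma mx_thread_lin (a : F) v w : mx_thread v -> mx_thread w ->
  mx_thread (fun n => a *: v n + w n).
Proof. by move=> vM wM n; rewrite vM wM mulmxDr scalemxAr. Qed.

Lemma mx_thread_eq0 v : mx_thread v -> v 0%N = 0 -> forall n, v n = 0.
Proof.
have [S [SM MdE]] := exists_commuting_range_inverse M.
move=> vM v0; elim=> [//|n IHn].
rewrite (mx_thread_shift vM n.+1 d) MdE exprS -!mulmxE -!mulmxA.
by rewrite -(mx_thread_shift vM n.+1 d) -vM IHn !mulmx0.
Qed.

Lemma exists_mx_thread_from_range y : exists v, mx_thread v /\ v 0%N = M ^+ d *m y.
Proof.
have [S [SM MdE]] := exists_commuting_range_inverse M.
exists (fun n => S ^+ n *m (M ^+ d *m y)); split; last by rewrite expr0 mul1mx.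
move=> n; rewrite !mulmxA !mulmxE; congr (_ *m _).
rewrite exprSr mulrA (commrX n (esym SM)) -!mulrA; congr (_ * _).
by rewrite mulrA -SM -mulrA -exprS -MdE.
Qed.

Lemma mx_thread_iso_range (N : 'cV[F]_d -> Prop) :
  (forall x, N x <-> exists y, x = M ^+ d *m y) ->
  exists phi : (nat -> 'cV[F]_d) -> 'cV[F]_d,
     (forall (a : F) v w, mx_thread v -> mx_thread w ->
        phi (fun n => a *: v n + w n) = a *: phi v + phi w) /\
     (forall v, mx_thread v -> N (phi v)) /\
     (forall v w, mx_thread v -> mx_thread w -> phi v = phi w -> v = w) /\
     (forall x, N x -> exists v, mx_thread v /\ phi v = x).
Proof.
move=> NE; exists (fun v => v 0%N); split => //; split.
  by move=> v vM; apply/NE; exists (v d); rewrite (mx_thread_shift vM 0 d).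
split=> [v w vM wM vw0 | x /NE[y ->]]; last exact: exists_mx_thread_from_range.
apply: functional_extensionality => n; apply/eqP; rewrite -subr_eq0; apply/eqP.
have := mx_thread_eq0 (mx_thread_lin (-1) wM vM).
by rewrite /= vw0 scaleN1r addNr => /(_ erefl n); rewrite scaleN1r addrC.
Qed.

End Threads.

Section NonNilpotentPart.
Variable F : fieldType.

Lemma NonN_closed_add d (M : 'M[F]_d) x y :
  NonN_closed M x -> NonN_closed M y -> NonN_closed M (x + y).
Proof.
move=> [s [sM ->]] [t [tM ->]]; exists (s ++ t); rewrite big_cat; split => //.
by move=> p; rewrite mem_cat => /orP[/sM|/tM].
Qed.

Lemma horner_mx_mulmxA n (M : 'M[F]_n.+1) p q (x : 'cV[F]_n.+1) :
  horner_mx M p *m (horner_mx M q *m x) = horner_mx M (p * q) *m x.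
Proof. by rewrite rmorphM mulmxA mulmxE. Qed.

Lemma horner_mx_XsubCX n (M : 'M[F]_n.+1) (a : F) k :
  horner_mx M (('X - a%:P) ^+ k) = (M - a%:M) ^+ k.
Proof. by rewrite rmorphXn rmorphB /= horner_mx_X horner_mx_C. Qed.

(* A generalized eigenvector for [a != 0] lies in the range of [M ^+ d]:
   Bezout for the coprime [('X - a)^k] and ['X^d]. *)
Lemma NonN_closed_range d (M : 'M[F]_d) x :
  NonN_closed M x -> exists y, x = M ^+ d *m y.
Proof.
case: d M x => [|n] M x; first by exists x; rewrite expr0 mul1mx.
move=> [s [sM ->]]; elim: s sM => [|p s IHs] sM; first by exists 0; rewrite big_nil mulmx0.
have [y sE] := IHs (fun q sq => sM q (mem_behead (s := p :: s) sq)).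
have [/= p1_neq0 [k pk0]] := sM p (mem_head _ _).
have cop : coprimep (('X - p.1%:P) ^+ k) ('X ^+ n.+1).
  by apply/coprimep_expl/coprimep_expr; rewrite coprimep_sym coprimep_XsubC rootX.
have [[u1 u2] /= uE] := Bezout_eq1_coprimepP _ _ cop.
exists (horner_mx M u2 *m p.2 + y); rewrite big_cons mulmxDr -sE; congr (_ + _).
transitivity (horner_mx M 1 *m p.2); first by rewrite rmorph1 mul1mx.
rewrite -uE rmorphD mulmxDl -horner_mx_mulmxA horner_mx_XsubCX pk0 mulmx0 add0r.
by rewrite mulrC -horner_mx_mulmxA rmorphXn /= horner_mx_X.
Qed.

(* Primary decomposition along the pairwise coprime factors [('X - z) ^+ e z]. *)
Lemma NonN_closed_of_annihilator n (M : 'M[F]_n.+1) (e : F -> nat) (l : seq F) x :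
  uniq l -> 0 \notin l ->
  horner_mx M (\prod_(z <- l) ('X - z%:P) ^+ e z) *m x = 0 -> NonN_closed M x.
Proof.
elim: l x => [|z l IHl] x /=.
  by rewrite big_nil rmorph1 mul1mx => _ _ ->; exists [::]; rewrite big_nil.
move=> /andP[z_notin_l l_uniq]; rewrite in_cons negb_or => /andP[z_neq0 l_neq0].
rewrite big_cons; set P := ('X - z%:P) ^+ e z; set Q := \prod_(_ <- _) _ => PQx0.
have cop : coprimep P Q.
  apply/coprimep_expl; rewrite coprimep_sym coprimep_XsubC /root horner_prod.
  rewrite prodf_seq_neq0; apply/allP => w wl /=.
  rewrite horner_exp hornerD hornerN hornerX hornerC expf_neq0 // subr_eq0.
  by apply: contraNneq z_notin_l => ->.
have [[u1 u2] /= uE] := Bezout_eq1_coprimepP _ _ cop.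
have -> : x = horner_mx M (u2 * Q) *m x + horner_mx M (u1 * P) *m x.
  by rewrite -mulmxDl -rmorphD addrC uE rmorph1 mul1mx.
apply: NonN_closed_add.
  exists [:: (z, horner_mx M (u2 * Q) *m x)]; rewrite big_seq1; split => //.
  move=> p; rewrite mem_seq1 => /eqP -> /=; split; first by rewrite eq_sym.
  exists (e z); rewrite -horner_mx_XsubCX horner_mx_mulmxA mulrCA.
  by rewrite -horner_mx_mulmxA PQx0 mulmx0.
apply: IHl => //.
by rewrite horner_mx_mulmxA mulrCA [Q * _]mulrC -horner_mx_mulmxA PQx0 mulmx0.
Qed.

End NonNilpotentPart.

Lemma range_NonN_closed (F : closedFieldType) d (M : 'M[F]_d) y :
  NonN_closed M (M ^+ d *m y).
Proof.
case: d M y => [|n] M y; first by exists [::]; rewrite big_nil [_ *m y]flatmx0.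
have [m [q [le_m_n [q0 qM0]]]] := char_poly_split_X M.
have qMy0 : horner_mx M q *m (M ^+ n.+1 *m y) = 0.
  have -> : M ^+ n.+1 = M ^+ m * M ^+ (n.+1 - m) by rewrite -exprD subnKC.
  by rewrite mulmxA mulmxE mulrA qM0 mul0r mul0mx.
have lq_neq0 : lead_coef q != 0.
  by rewrite lead_coef_eq0; apply: contraNneq q0 => ->; rewrite root0.
have [r qE] := closed_field_poly_normal q.
have r_neq0 : 0 \notin r by move: q0; rewrite qE rootZ // root_prod_XsubC.
apply: (@NonN_closed_of_annihilator _ _ M (fun z => count_mem z r) (undup r)).
- exact: undup_uniq.
- by rewrite mem_undup.
rewrite prodr_undup_exp_count.
move: qMy0; rewrite {1}qE -mul_polyC rmorphM /= horner_mx_C -mulmxA mul_scalar_mx.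
by move/eqP; rewrite scaler_eq0 (negbTE lq_neq0) => /eqP.
Qed.

Lemma NonN_closedE (F : closedFieldType) d (M : 'M[F]_d) x :
  NonN_closed M x <-> exists y, x = M ^+ d *m y.
Proof.
by split=> [/NonN_closed_range // | [y ->]]; apply: range_NonN_closed.
Qed.

Lemma map_mxX (R S : nzRingType) (f : {rmorphism R -> S}) d (M : 'M[R]_d) k :
  map_mx f (M ^+ k) = map_mx f M ^+ k.
Proof.
elim: k => [|k IHk]; first by rewrite !expr0 map_mx1.
by rewrite !exprS -!mulmxE map_mxM IHk.
Qed.

(* Over [R], membership in the range of a real matrix can be tested over [R[i]]. *)
Lemma NonN_realE (R : realType) d (M : 'M[R]_d) x :
  NonN_real M x <-> exists y, x = M ^+ d *m y.
Proof.
rewrite /NonN_real NonN_closedE; split => [[z xE] | [y ->]].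
  have : ((map_mx (real_complex R) x)^T <= (map_mx (real_complex R) M ^+ d)^T)%MS.
    by rewrite xE trmx_mul submxMl.
  rewrite -map_mxX !map_trmx map_submx => /submxP[D xDE].
  by exists D^T; apply: trmx_inj; rewrite trmx_mul trmxK.
by exists (map_mx (real_complex R) y); rewrite map_mxM map_mxX.
Qed.

Lemma fact_body_of_range (F : fieldType) d (A : 'M[bool]_d) (N : 'cV[F]_d -> Prop) :
  (forall x, N x <-> exists y, x = mxF A F ^+ d *m y) -> fact_body A N.
Proof.
move=> NE; split; last exact: mx_thread_iso_range.
move=> has_pred; split; first exact: is_staf_lin.
split; first exact: Kvec_thread.
split; first exact: Kvec_lin.
split; first exact: staf_eq_Kvec.
move=> v vA; exists (staf_of_thread v); split; first exact: is_staf_of_thread.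
exact: Kvec_staf_of_thread.
Qed.

Theorem fact8p2 (R : realType) (d : nat) (A : 'M[bool]_d) :
  fact_body A (NonN_real (mxF A R)) /\
  fact_body A (NonN_closed (mxF A R[i])).
Proof.
by split; apply: fact_body_of_range => x; [apply: NonN_realE | apply: NonN_closedE].
Qed.
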